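(* Let $X$ be a real Banach space with continuous dual $X^*$. Let $A\colon X\rightrightarrows X^*$ be maximal monotone and at most single-valued, and let $C$ be a nonempty closed convex subset of $X$. Suppose that $A|_{\operatorname{dom}A}$ is linear (i.e., $\operatorname{dom}A$ is a linear subspace and $A$, viewed as a map $\operatorname{dom}A\to X^*$, is linear), and that $\operatorname{dom}A\cap\operatorname{int}C\neq\varnothing$. Then $A+N_C$ is maximal monotone.
   Context: $\langle\cdot,\cdot\rangle$ denotes the pairing between $X$ and $X^*$. For a set-valued operator $A\colon X\rightrightarrows X^*$, $\operatorname{gra}A=\{(x,x^* )\in X\times X^*: x^*\in Ax\}$ and $\operatorname{dom}A=\{x: Ax\neq\varnothing\}$. $A$ is at most single-valued if for every $x$, $Ax$ is empty or a singleton; it is then identified with a map $\operatorname{dom}A\to X^*$. $A$ is monotone if $\langle x-y,x^*-y^*\rangle\ge 0$ for all $(x,x^* ),(y,y^* )\in\operatorname{gra}A$, and maximal monotone if it is monotone and no monotone operator has a graph properly containing $\operatorname{gra}A$. The normal cone operator of $C$ is $N_C(x)=\{x^*\in X^*:\sup_{c\in C}\langle c-x,x^*\rangle\le 0\}$ if $x\in C$ and $N_C(x)=\varnothing$ otherwise. $(A+N_C)x=\{a^*+b^*: a^*\in Ax,\ b^*\in N_C(x)\}$. *)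

From HB Require Import structures.
From mathcomp Require Import all_boot all_order all_algebra.
From mathcomp Require Import all_classical all_reals all_analysis.
Set Implicit Arguments. Unset Strict Implicit. Unset Printing Implicit Defensive.
Import Order.TTheory GRing.Theory Num.Theory.
Import numFieldNormedType.Exports.
Local Open Scope classical_set_scope.
Local Open Scope ring_scope.

(* Elements of the continuous dual X^* are represented as functions X -> R
   that are linear and continuous; the pairing <x, x^*> is x^* x. *)
Definition is_dual (R : realType) (X : normedModType R) (f : X -> R) : Prop :=
  (forall (a : R) (x y : X), f (a *: x + y) = a * f x + f y) /\ continuous f.

Definition operator (R : realType) (X : normedModType R) := X -> set (X -> R).

Definition into_dual (R : realType) (X : normedModType R) (A : operator X) : Prop :=
  forall x f, A x f -> is_dual f.

Definition dom (R : realType) (X : normedModType R) (A : operator X) : set X :=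
  [set x | exists f, A x f].

Definition at_most_single_valued (R : realType) (X : normedModType R)
  (A : operator X) : Prop :=
  forall x f g, A x f -> A x g -> f = g.

Definition monotone (R : realType) (X : normedModType R) (A : operator X) : Prop :=
  forall x y f g, A x f -> A y g -> 0 <= f (x - y) - g (x - y).

Definition gra_sub (R : realType) (X : normedModType R) (A B : operator X) : Prop :=
  forall x f, A x f -> B x f.

Definition maximal_monotone (R : realType) (X : normedModType R)
  (A : operator X) : Prop :=
  into_dual A /\ monotone A /\
  forall B : operator X, into_dual B -> monotone B -> gra_sub A B -> gra_sub B A.

Definition normal_cone (R : realType) (X : normedModType R) (C : set X) : operator X :=
  fun x f => C x /\ is_dual f /\ (forall c, C c -> f (c - x) <= 0).

Definition op_sum (R : realType) (X : normedModType R) (A B : operator X) : operator X :=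
  fun x h => exists f g, A x f /\ B x g /\ h = (fun z => f z + g z).

Definition is_convex_set (R : realType) (X : normedModType R) (C : set X) : Prop :=
  forall x y (t : R), C x -> C y -> 0 <= t -> t <= 1 -> C (t *: x + (1 - t) *: y).

Definition dom_subspace (R : realType) (X : normedModType R) (A : operator X) : Prop :=
  dom A 0 /\ forall (a : R) x y, dom A x -> dom A y -> dom A (a *: x + y).

Definition linear_on_dom (R : realType) (X : normedModType R) (A : operator X) : Prop :=
  forall (a : R) x y f g, A x f -> A y g -> A (a *: x + y) (fun z => a * f z + g z).

From Pilot Require Import Defs.
From HB Require Import structures.
From mathcomp Require Import all_boot all_order all_algebra.
From mathcomp Require Import all_classical all_reals all_analysis.
From mathcomp Require Import ring lra.
Import Order.TTheory GRing.Theory Num.Theory.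
Import numFieldNormedType.Exports.
Local Open Scope classical_set_scope.
Local Open Scope ring_scope.

(* Let (z, z^* ) be monotonically related to every point of the graph of
   A + N_C; we show that it lies on that graph.  First, z is in C: dom A is
   dense (a functional vanishing on dom A is monotonically related to A at 0,
   hence equal to A 0 = 0), and for y in dom A near z the point p where the
   segment from x0 in dom A and int C to y leaves C carries a normal functional
   v, for which relatedness forces v (z - p) <= 0; this bounds the distance
   from z to C by a multiple of |z - y|.  Second, the set int C x (0, +oo)
   minus the hypograph of e |-> <A e - z^*, z - e> over dom A is open, convex
   (this is where linearity and monotonicity of A enter) and misses the origin.
   A functional separating it from the origin, built from a Minkowski gauge
   and the Hahn-Banach theorem, splits z^* as a + n where (z, a) is
   monotonically related to A, so a = A z by maximality, and n is in N_C z. *)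

Section LinearFunctional.
Context {R : realType} {V : lmodType R}.

Definition linear_functional (f : V -> R) :=
  forall a x y, f (a *: x + y) = a * f x + f y.

Context {f : V -> R}.
Hypothesis flin : linear_functional f.

Lemma lfun0 : f 0 = 0.
Proof. by have := flin 1 0 0; rewrite scale1r addr0 mul1r; lra. Qed.

Lemma lfunD x y : f (x + y) = f x + f y.
Proof. by rewrite -{1}(scale1r x) flin mul1r. Qed.

Lemma lfunZ a x : f (a *: x) = a * f x.
Proof. by rewrite -(addr0 (a *: x)) flin lfun0 addr0. Qed.

Lemma lfunN x : f (- x) = - f x.
Proof. by rewrite -scaleN1r lfunZ mulN1r. Qed.

Lemma lfunB x y : f (x - y) = f x - f y.
Proof. by rewrite lfunD lfunN. Qed.

Lemma lfun_scale k : linear_functional (fun x => k * f x).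
Proof. by move=> a x y; rewrite flin mulrDr mulrCA. Qed.

End LinearFunctional.

(** * The Hahn-Banach theorem *)

Section HahnBanach.
Context {R : realType} {V : lmodType R} {p : V -> R}.
Hypothesis p_ge0 : forall x, 0 <= p x.
Hypothesis p_add : forall x y, p (x + y) <= p x + p y.
Hypothesis p_scale : forall t x, 0 < t -> p (t *: x) <= t * p x.

Lemma sublinear0 : p 0 = 0.
Proof.
apply/eqP; rewrite eq_le p_ge0 andbT.
have := p_scale (2^-1) 0 ltac:(by rewrite invr_gt0); rewrite scaler0.
by have := p_ge0 0; lra.
Qed.

Lemma sublinear_scale_ge t x : t * p x <= p (t *: x).
Proof.
case: (ltrgtP t 0) => [t_lt0|t_gt0|->].
- by apply: le_trans (p_ge0 _); rewrite nmulr_rle0 // p_ge0.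
- have := p_scale t^-1 (t *: x); rewrite invr_gt0 scalerA mulVf ?gt_eqF //.
  by rewrite scale1r -(ler_pM2l t_gt0) mulrA mulfV ?gt_eqF // mul1r; apply.
- by rewrite mul0r scale0r sublinear0.
Qed.

Lemma sublinearZ t x : 0 < t -> p (t *: x) = t * p x.
Proof. by move=> t_gt0; apply/eqP; rewrite eq_le p_scale // sublinear_scale_ge. Qed.

Definition dominated_graph (G : set (V * R)) :=
  [/\ forall x r s, G (x, r) -> G (x, s) -> r = s,
      forall a x y r s, G (x, r) -> G (y, s) -> G (a *: x + y, a * r + s)
    & forall x r, G (x, r) -> r <= p x].

Definition line_graph (x1 : V) : set (V * R) :=
  [set w | exists t, w = (t *: x1, t * p x1)].

Lemma dominated_line x1 : dominated_graph (line_graph x1).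
Proof.
split.
- move=> x r s [t [-> ->]] [u [tu ->]].
  have [->|x1_neq0] := eqVneq x1 0; first by rewrite sublinear0 !mulr0.
  have : (t - u) *: x1 = 0 by rewrite scalerBl tu subrr.
  by move/eqP; rewrite scaler_eq0 (negbTE x1_neq0) orbF subr_eq0 => /eqP ->.
- move=> a x y r s [t [-> ->]] [u [-> ->]]; exists (a * t + u).
  by rewrite scalerDl scalerA mulrDl mulrA.
- by move=> x r [t [-> ->]]; exact: sublinear_scale_ge.
Qed.

Lemma dominated_graph0 {G x r} : dominated_graph G -> G (x, r) -> G (0, 0).
Proof.
by case=> _ comb _ Gx; have := comb (-1) _ _ _ _ Gx Gx; rewrite scaleN1r mulN1r !addNr.
Qed.

Lemma dominated_graphZ {G} a {x r} : dominated_graph G -> G (x, r) -> G (a *: x, a * r).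
Proof.
move=> GP Gx; case: (GP) => _ comb _.
by have := comb a _ _ _ _ Gx (dominated_graph0 GP Gx); rewrite !addr0.
Qed.

Lemma dominated_bigcup (G0 : set (V * R)) (F : set (set (V * R))) :
  dominated_graph G0 -> (forall G, F G -> dominated_graph (G `|` G0)) ->
  total_on F subset -> dominated_graph (\bigcup_(G in F) G `|` G0).
Proof.
move=> G0P FP Ftot; set U := _ `|` G0.
have common w1 w2 : U w1 -> U w2 ->
    exists G, [/\ dominated_graph G, G `<=` U, G w1 & G w2].
  have member w : U w -> exists2 G, (F G \/ G = set0) & (G `|` G0) w.
    by case=> [[G FG Gw]|G0w]; [exists G; left|exists set0; right].
  have memberP G : F G \/ G = set0 -> dominated_graph (G `|` G0) /\ G `|` G0 `<=` U.
    case=> [FG|->]; last by rewrite set0U; split=> // w; right.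
    by split; [exact: FP|move=> w [Gw|G0w]; [left; exists G|right]].
  move=> /member[G1 FG1 G1w] /member[G2 FG2 G2w].
  have [sub12|sub21] : G1 `<=` G2 \/ G2 `<=` G1.
  - case: FG1 => [FG1|->]; last by left.
    case: FG2 => [FG2|->]; [exact: Ftot|by right].
  - have [P2 s2] := memberP _ FG2; exists (G2 `|` G0); split=> //.
    by case: G1w => [/sub12|]; [left|right].
  - have [P1 s1] := memberP _ FG1; exists (G1 `|` G0); split=> //.
    by case: G2w => [/sub21|]; [left|right].
split.
- by move=> x r s /common /[apply] -[G [[fun_G _ _] _ Gr Gs]]; exact: fun_G Gr Gs.
- move=> a x y r s /common /[apply] -[G [[_ comb _] GU Gx Gy]].
  exact/GU/comb.
- move=> x r Ux; have [G [[_ _ dom_G] _ Gx _]] := common _ _ Ux Ux.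
  exact: dom_G Gx.
Qed.

Section OneStepExtension.
Variables (H : set (V * R)) (x2 : V).
Hypotheses (HP : dominated_graph H) (H00 : H (0, 0)) (x2_notin : forall r, ~ H (x2, r)).

Lemma extension_constant : exists c,
  (forall y s, H (y, s) -> s - p (y - x2) <= c) /\
  (forall x r, H (x, r) -> c <= p (x + x2) - r).
Proof.
case: HP => _ comb dom_H.
have sep y s x r : H (y, s) -> H (x, r) -> s - p (y - x2) <= p (x + x2) - r.
  move=> Hy Hx; have := dom_H _ _ (comb 1 _ _ _ _ Hx Hy); rewrite scale1r mul1r.
  by have := p_add (x + x2) (y - x2); rewrite addrACA subrr addr0; lra.
pose S := [set v | exists y s, H (y, s) /\ v = s - p (y - x2)].
have S_ub : ubound S (p (0 + x2) - 0) by move=> _ [y [s [Hy ->]]]; exact: sep Hy H00.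
exists (sup S); split.
- by move=> y s Hy; apply: ub_le_sup; [exists (p (0 + x2) - 0)|exists y, s].
- move=> x r Hx; apply: ge_sup; first by exists (0 - p (0 - x2)), 0, 0.
  by move=> _ [y [s [Hy ->]]]; exact: sep Hy Hx.
Qed.

Variable c : R.
Hypothesis c_lb : forall y s, H (y, s) -> s - p (y - x2) <= c.
Hypothesis c_ub : forall x r, H (x, r) -> c <= p (x + x2) - r.

Definition extension_graph : set (V * R) :=
  [set w | exists x r t, H (x, r) /\ w = (x + t *: x2, r + t * c)].

Lemma sub_extension_graph : H `<=` extension_graph.
Proof. by move=> [x r] Hx; exists x, r, 0; rewrite scale0r mul0r !addr0. Qed.

Lemma extension_graph_x2 : extension_graph (x2, c).
Proof. by exists 0, 0, 1; rewrite scale1r mul1r !add0r. Qed.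

Lemma extension_functional x r s :
  extension_graph (x, r) -> extension_graph (x, s) -> r = s.
Proof.
case: HP => fun_H comb _.
move=> [y1 [r1 [t1 [H1 [-> ->]]]]] [y2 [r2 [t2 [H2 [e ->]]]]].
have [t12|t12] := eqVneq t1 t2.
  have y12 : y1 = y2 by apply: (addIr (t1 *: x2)); rewrite e t12.
  by move: H2; rewrite -y12 t12 => /(fun_H _ _ _ H1) ->.
exfalso; apply: (x2_notin ((t1 - t2)^-1 * (-1 * r1 + r2))).
have -> : x2 = (t1 - t2)^-1 *: (-1 *: y1 + y2).
  have -> : -1 *: y1 + y2 = (t1 - t2) *: x2.
    by rewrite scalerBl scaleN1r; apply: (addrI y1); rewrite addNKr addrA e addrK.
  by rewrite scalerA mulVf ?scale1r // subr_eq0.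
exact/(dominated_graphZ _ HP)/comb.
Qed.

Lemma extension_comb a x y r s :
  extension_graph (x, r) -> extension_graph (y, s) ->
  extension_graph (a *: x + y, a * r + s).
Proof.
case: HP => _ comb _.
move=> [y1 [r1 [t1 [H1 [-> ->]]]]] [y2 [r2 [t2 [H2 [-> ->]]]]].
exists (a *: y1 + y2), (a * r1 + r2), (a * t1 + t2); split; first exact: comb.
congr (_, _); first by rewrite scalerDr scalerA scalerDl addrACA.
by rewrite mulrDr mulrA mulrDl addrACA.
Qed.

Lemma extension_dominated x r : extension_graph (x, r) -> r <= p x.
Proof.
move=> [y [s [t [Hy [-> ->]]]]].
case: (ltrgtP t 0) => [t_lt0|t_gt0|->]; last first.
- by rewrite scale0r mul0r !addr0; case: HP => _ _; apply.
- have := c_ub _ _ (dominated_graphZ t^-1 HP Hy).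
  rewrite -(ler_pM2l t_gt0) mulrBr -sublinearZ // scalerDr scalerA mulrA.
  by rewrite mulfV ?gt_eqF // scale1r mul1r; lra.
- have u_gt0 : 0 < - t by rewrite oppr_gt0.
  have := c_lb _ _ (dominated_graphZ (- t)^-1 HP Hy).
  rewrite -(ler_pM2l u_gt0) mulrBr -sublinearZ // scalerBr scalerA mulrA.
  by rewrite mulfV ?gt_eqF // scale1r mul1r scaleNr opprK; lra.
Qed.

Lemma dominated_extension : dominated_graph extension_graph.
Proof.
split; [exact: extension_functional|exact: extension_comb|exact: extension_dominated].
Qed.

End OneStepExtension.
Arguments extension_constant {H} x2.
Arguments dominated_extension {H x2} HP x2_notin {c}.

Lemma hahn_banach (x1 : V) : exists f : V -> R,
  [/\ linear_functional f, forall x, f x <= p x & f x1 = p x1].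
Proof.
pose L := line_graph x1.
have L_x1 : L (x1, p x1) by exists 1; rewrite scale1r mul1r.
(* Zorn is applied to the G with G `|` L dominated, so that the empty chain is
   harmless and a maximal G already passes through (x1, p x1). *)
pose P := [set G : set (V * R) | dominated_graph (G `|` L)].
have [H [PH H_max]] : exists H, P H /\ forall G, H `<` G -> ~ P G.
  by apply: Zorn_bigcup => F FP Ftot; exact: dominated_bigcup (dominated_line x1) FP Ftot.
have HP : dominated_graph (H `|` L) := PH.
have total x : exists r, (H `|` L) (x, r).
  apply: contrapT => /forallNP x_notin.
  have H00 : (H `|` L) (0, 0) := dominated_graph0 HP (or_intror L_x1).
  have [c [c_lb c_ub]] := extension_constant x HP H00.
  set G := extension_graph (H `|` L) x c.
  have sub_G := sub_extension_graph (H `|` L) x c.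
  apply: (H_max G).
    split=> [w Hw|HG]; first by apply: sub_G; left.
    by apply: (x_notin c); left; apply: HG; exact: extension_graph_x2.
  rewrite /P /=; have -> : G `|` L = G.
    by apply/seteqP; split=> [w [//|Lw]|w Gw]; [apply: sub_G; right|left].
  exact: (dominated_extension HP x_notin c_lb c_ub).
have [fun_H comb dom_H] := HP.
pose f x := proj1_sig (cid (total x)).
have Hf x : (H `|` L) (x, f x) by rewrite /f; case: cid.
exists f; split.
- by move=> a x y; apply: (fun_H (a *: x + y)); [exact: Hf|exact: comb].
- by move=> x; exact: dom_H.
- exact: fun_H (Hf x1) (or_intror L_x1).
Qed.

End HahnBanach.

(** * Separation of an open convex set from a point *)

Lemma interior_ballP {R : realType} {X : normedModType R} (C : set X) u :
  interior C u <-> exists2 r, 0 < r & forall y, `|u - y| < r -> C y.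
Proof.
split=> [/nbhs_ballP[r r_gt0 sub]|[r r_gt0 sub]].
  by exists r => // y uy; apply: sub; rewrite -ball_normE.
by apply/nbhs_ballP; exists r => // y; rewrite -ball_normE; exact: sub.
Qed.

Lemma open_normP {R : realType} {X : normedModType R} (U : set X) :
  open U <-> forall x, U x -> exists2 r, 0 < r & forall y, `|x - y| < r -> U y.
Proof. by rewrite openE; split=> Uo x /Uo /interior_ballP. Qed.

Section MinkowskiGauge.
Context {R : realType} {X : normedModType R}.
Variables (W : set X) (r : R).
Hypotheses (W_convex : is_convex_set W) (r_gt0 : 0 < r)
  (W_ball : forall v, `|v| < r -> W v).

Definition mgauge_set v := [set t : R | 0 < t /\ W (t^-1 *: v)].
Definition mgauge v := inf (mgauge_set v).

Lemma mgauge_setP v t : 0 < t -> `|v| < t * r -> mgauge_set v t.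
Proof.
move=> t_gt0 vt; split=> //; apply: W_ball.
by rewrite normrZ gtr0_norm ?invr_gt0 // mulrC ltr_pdivrMr // mulrC.
Qed.

Lemma mgauge_set0 v : mgauge_set v !=set0.
Proof.
have v_ge0 := normr_ge0 v.
exists ((`|v| + 1) / r); apply: mgauge_setP; last by rewrite divfK ?gt_eqF //; lra.
by rewrite divr_gt0 //; lra.
Qed.

Lemma mgauge_set_lb v : lbound (mgauge_set v) 0.
Proof. by move=> t [t_gt0 _]; exact: ltW. Qed.

Lemma mgauge_le v t : mgauge_set v t -> mgauge v <= t.
Proof. by move=> vt; apply: ge_inf => //; exists 0; exact: mgauge_set_lb. Qed.

Lemma mgauge_ge0 v : 0 <= mgauge v.
Proof. by apply: lb_le_inf; [exact: mgauge_set0|exact: mgauge_set_lb]. Qed.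

Lemma mgauge_le_norm v : mgauge v <= `|v| / r.
Proof.
apply/ler_addgt0Pr => e e_gt0; apply: mgauge_le; apply: mgauge_setP.
  by have := divr_ge0 (normr_ge0 v) (ltW r_gt0); lra.
by rewrite mulrDl divfK ?gt_eqF //; have := mulr_gt0 e_gt0 r_gt0; lra.
Qed.

Lemma mgaugeZ t v : 0 < t -> mgauge (t *: v) <= t * mgauge v.
Proof.
move=> t_gt0; rewrite -ler_pdivrMl //; apply: lb_le_inf; first exact: mgauge_set0.
move=> s [s_gt0 Ws]; rewrite ler_pdivrMl //; apply: mgauge_le; split.
  exact: mulr_gt0.
by rewrite scalerA invfM mulrAC mulVf ?gt_eqF // mul1r.
Qed.

Lemma mgaugeD x y : mgauge (x + y) <= mgauge x + mgauge y.
Proof.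
rewrite -lerBlDr; apply: lb_le_inf; first exact: mgauge_set0.
move=> s [s_gt0 Ws]; rewrite lerBlDr -lerBlDl; apply: lb_le_inf; first exact: mgauge_set0.
move=> u [u_gt0 Wu]; rewrite lerBlDl; apply: mgauge_le; split; first by lra.
have su_gt0 : 0 < s + u by lra.
have -> : (s + u)^-1 *: (x + y) =
    s / (s + u) *: (s^-1 *: x) + (1 - s / (s + u)) *: (u^-1 *: y).
  have -> : 1 - s / (s + u) = u / (s + u) by field; rewrite gt_eqF.
  rewrite scalerDr !scalerA; congr (_ *: _ + _ *: _); field.
    by rewrite !gt_eqF.
  by rewrite !gt_eqF.
apply: W_convex => //; first by apply: divr_ge0; lra.
by rewrite ler_pdivrMr // mul1r; lra.
Qed.

Lemma mgauge_lt1 v : open W -> W v -> mgauge v < 1.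
Proof.
move=> /open_normP W_open Wv; have [rho rho_gt0 ball_v] := W_open _ Wv.
have v_ge0 := normr_ge0 v.
pose eta := rho / (`|v| + 1).
have eta_gt0 : 0 < eta by apply: divr_gt0; lra.
have eta_v : eta * `|v| < rho by rewrite /eta mulrAC ltr_pdivrMr; nra.
apply: (@le_lt_trans _ _ (1 + eta)^-1); last by rewrite invf_lt1; lra.
apply: mgauge_le; split; first by rewrite invr_gt0; lra.
rewrite invrK; apply: ball_v.
by rewrite scalerDl scale1r opprD addrA subrr sub0r normrN normrZ gtr0_norm.
Qed.

Lemma mgauge_ge1 w : W 0 -> ~ W w -> 1 <= mgauge w.
Proof.
move=> W0 Ww; rewrite leNgt; apply/negP => w_lt1.
have eps_gt0 : 0 < 1 - mgauge w by lra.
have inf_w : has_inf (mgauge_set w).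
  by split; [exact: mgauge_set0|exists 0; exact: mgauge_set_lb].
have [t [t_gt0 Wt] t_lt] := inf_adherent eps_gt0 inf_w.
apply: Ww; have := W_convex _ _ t Wt W0 (ltW t_gt0).
rewrite scalerA mulfV ?gt_eqF // scale1r scaler0 addr0; apply.
by move: t_lt; rewrite /mgauge; lra.
Qed.

End MinkowskiGauge.
Arguments mgauge_ge0 {R X W r}. Arguments mgaugeD {R X W r}. Arguments mgaugeZ {R X W r}.
Arguments mgauge_le_norm {R X W r}. Arguments mgauge_lt1 {R X W}.
Arguments mgauge_ge1 {R X W r}.

Section DualElements.
Context {R : realType} {X : normedModType R}.

Lemma is_dual_bounded {f : X -> R} {K} :
  linear_functional f -> (forall v, `|f v| <= K * `|v|) -> is_dual f.
Proof.
move=> flin f_le; split=> // x; apply/cvgrPdist_lt => e e_gt0.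
have K1_gt0 : 0 < `|K| + 1 by have := normr_ge0 K; lra.
apply/nbhs_ballP; exists (e / (`|K| + 1)); first exact: divr_gt0.
move=> y; rewrite -ball_normE /= ltr_pdivlMr // => xy.
rewrite -(lfunB flin); apply: le_lt_trans (f_le _) _.
by have := ler_norm K; have := normr_ge0 (x - y); nra.
Qed.

Lemma is_dual0 : is_dual (fun _ : X => 0 : R).
Proof. by split=> [a x y|x]; [rewrite mulr0 addr0|exact: cvg_cst]. Qed.

Lemma is_dual_scale {f : X -> R} k : is_dual f -> is_dual (fun x => k * f x).
Proof.
move=> [flin fcont]; split; first exact: lfun_scale.
by move=> x; apply: continuousM; [exact: cvg_cst|exact: fcont].
Qed.

Lemma is_dual_add {f g : X -> R} : is_dual f -> is_dual g -> is_dual (fun x => f x + g x).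
Proof.
move=> [flin fcont] [glin gcont]; split.
  by move=> a x y; rewrite flin glin mulrDr addrACA.
by move=> x; apply: continuousD; [exact: fcont|exact: gcont].
Qed.

Lemma is_dual_sub {f g : X -> R} : is_dual f -> is_dual g -> is_dual (fun x => f x - g x).
Proof.
move=> fd /(is_dual_scale (-1)) gd; have := is_dual_add fd gd.
by congr is_dual; apply: funext => x; rewrite mulN1r.
Qed.

End DualElements.

Lemma open_convex_separation {R : realType} {X : normedModType R} {U : set X} {x0 q : X} :
  open U -> is_convex_set U -> U x0 -> ~ U q ->
  exists f : X -> R, [/\ linear_functional f,
    (exists K, forall v, `|f v| <= K * `|v|) & forall u, U u -> f u < f q].
Proof.
move=> U_open U_convex Ux0 Uq.
pose W := [set v | U (x0 + v)].
have W_open : open W.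
  apply/open_normP => v Wv; have [rho rho_gt0 ball_v] := (open_normP U).1 U_open _ Wv.
  by exists rho => // w vw; apply: ball_v; rewrite opprD addrACA subrr add0r.
have W_convex : is_convex_set W.
  move=> a b t Wa Wb t_ge0 t_le1; have := U_convex _ _ t Wa Wb t_ge0 t_le1.
  by rewrite /W /= !scalerDr addrACA -scalerDl (addrC t) subrK scale1r.
have [r r_gt0 ball_x0] := (open_normP U).1 U_open _ Ux0.
have W_ball v : `|v| < r -> W v.
  by move=> vr; apply: ball_x0; rewrite opprD addrA subrr sub0r normrN.
have [f [flin f_le fq]] := hahn_banach (mgauge_ge0 r_gt0 W_ball) (mgaugeD W_convex r_gt0 W_ball)
  (mgaugeZ r_gt0 W_ball) (q - x0).
exists f; split=> //.
- exists r^-1 => v; rewrite ler_norml mulrC.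
  have := f_le (- v); rewrite (lfunN flin) => f_le_N.
  have := mgauge_le_norm r_gt0 W_ball (- v); rewrite normrN.
  by have := f_le v; have := mgauge_le_norm r_gt0 W_ball v; lra.
- move=> u Uu.
  have : mgauge W (u - x0) < 1.
    by apply: mgauge_lt1 => //; rewrite /W /= addrC subrK.
  have : 1 <= mgauge W (q - x0).
    by apply: (mgauge_ge1 W_convex r_gt0 W_ball); rewrite /W /= ?addr0 // addrC subrK.
  by have := f_le (u - x0); rewrite !(lfunB flin) in fq *; lra.
Qed.

Lemma le_convex_comb_le (R : realType) (a b M : R) :
  (forall t, 0 < t -> t <= 1 -> t * a + (1 - t) * b <= M) -> b <= M.
Proof.
move=> comb_le; apply/ler_addgt0Pr => e e_gt0.
have k_ge0 := normr_ge0 (a - b); set k := `|a - b| in k_ge0.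
have ke_gt0 : 0 < k + e by lra.
pose t := e / (k + e).
have tke : t * (k + e) = e by rewrite /t divfK ?gt_eqF.
have := comb_le t (divr_gt0 e_gt0 ke_gt0).
have : - k <= a - b by rewrite lerNl opprB /k distrC; exact: ler_norm.
by rewrite ler_pdivrMr // mul1r; nra.
Qed.

Section ConvexSets.
Context {R : realType} {X : normedModType R}.
Implicit Types (C S : set X) (f : X -> R).

Lemma convex_comb_addr (a b d : X) t :
  t *: (a + d) + (1 - t) *: (b + d) = t *: a + (1 - t) *: b + d.
Proof. by rewrite !scalerDr addrACA -scalerDl [t + _]addrC subrK scale1r. Qed.

Lemma convex_interior {C} : is_convex_set C -> is_convex_set (interior C).
Proof.
move=> C_convex a b t /interior_ballP[r1 r1_gt0 ball_a] /interior_ballP[r2 r2_gt0 ball_b] t0 t1.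
apply/interior_ballP; exists (Num.min r1 r2); first by rewrite lt_min r1_gt0 r2_gt0.
move=> y; rewrite lt_min => /andP[y1 y2].
pose d := y - (t *: a + (1 - t) *: b).
have -> : y = t *: (a + d) + (1 - t) *: (b + d) by rewrite convex_comb_addr /d addrC subrK.
by apply: C_convex => //; [apply: ball_a|apply: ball_b];
  rewrite opprD addrA subrr sub0r normrN /d distrC.
Qed.

Lemma interior_segment {C x0 c t} : is_convex_set C -> interior C x0 -> C c ->
  0 < t -> t <= 1 -> interior C (t *: x0 + (1 - t) *: c).
Proof.
move=> C_convex /interior_ballP[r r_gt0 ball_x0] Cc t_gt0 t_le1.
apply/interior_ballP; exists (t * r); first exact: mulr_gt0.
move=> y yr; set p := t *: x0 + _ in yr.
have -> : y = t *: (x0 + t^-1 *: (y - p)) + (1 - t) *: c.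
  by rewrite scalerDr scalerA mulfV ?gt_eqF // scale1r (addrC (t *: x0)) -addrA subrK.
apply: C_convex => //; last exact: ltW.
apply: ball_x0; rewrite opprD addrA subrr sub0r normrN normrZ gtr0_norm ?invr_gt0 //.
by rewrite distrC mulrC ltr_pdivrMr // mulrC.
Qed.

Lemma le_interior_le {C x0 f M} : is_convex_set C -> interior C x0 ->
  linear_functional f -> (forall u, interior C u -> f u <= M) ->
  forall c, C c -> f c <= M.
Proof.
move=> C_convex Cx0 flin f_le c Cc; apply: (@le_convex_comb_le _ (f x0)) => t t_gt0 t_le1.
have := f_le _ (interior_segment C_convex Cx0 Cc t_gt0 t_le1).
by rewrite (lfunD flin) !(lfunZ flin).
Qed.

Lemma closed_line_sup C x0 v (S : set R) : closed C ->
  (forall t, S t -> C (x0 + t *: v)) -> has_sup S -> C (x0 + sup S *: v).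
Proof.
move=> C_closed S_C S_sup; apply: C_closed => B /nbhs_ballP[e e_gt0 ball_B].
have nv_gt0 : 0 < `|v| + 1 by have := normr_ge0 v; lra.
have [t St t_gt] := sup_adherent (divr_gt0 e_gt0 nv_gt0) S_sup.
have t_le : t <= sup S := ub_le_sup S_sup.2 St.
exists (x0 + t *: v); split; first exact: S_C.
apply: ball_B; rewrite -ball_normE /= opprD addrACA subrr add0r -scalerBl normrZ.
rewrite ger0_norm ?subr_ge0 //.
have : sup S - t < e / (`|v| + 1) by lra.
by rewrite ltr_pdivlMr // => h; have := normr_ge0 v; nra.
Qed.

Lemma segment_boundary {C x0 y} : closed C -> interior C x0 -> ~ C y ->
  exists s, [/\ 0 <= s, s <= 1, C (x0 + s *: (y - x0))
    & ~ interior C (x0 + s *: (y - x0))].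
Proof.
move=> C_closed /[dup] /interior_subset Cx0 Ix0 Cy.
pose S := [set t : R | [/\ 0 <= t, t <= 1 & C (x0 + t *: (y - x0))]].
have S0 : S 0 by split; rewrite ?lexx ?ler01 // scale0r addr0.
have S_sup : has_sup S by split; [exists 0|exists 1 => t []].
have s_ge0 : 0 <= sup S := ub_le_sup S_sup.2 S0.
have s_le1 : sup S <= 1 by apply: ge_sup; [exists 0|move=> t []].
have Cs : C (x0 + sup S *: (y - x0)) by apply: closed_line_sup => // t [].
exists (sup S); split=> // /interior_ballP[rho rho_gt0 ball_s].
have [s1|s_neq1] := eqVneq (sup S) 1.
  by apply: Cy; move: Cs; rewrite s1 scale1r addrC subrK.
have s_lt1 : sup S < 1 by rewrite lt_neqAle s_neq1 s_le1.
have n_ge0 := normr_ge0 (y - x0); set n := `|y - x0| in n_ge0.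
pose tau := (1 - sup S) * rho / (rho + n + 1).
have tau_n : tau * (rho + n + 1) = (1 - sup S) * rho by rewrite /tau divfK // gt_eqF //; lra.
have tau_gt0 : 0 < tau by apply: divr_gt0; [apply: mulr_gt0|]; lra.
suff : S (sup S + tau) by move/(ub_le_sup S_sup.2); lra.
split; [lra|nra|apply: ball_s].
rewrite opprD addrACA subrr add0r -scalerBl opprD addrA subrr sub0r.
by rewrite scaleNr normrN normrZ gtr0_norm // -/n; nra.
Qed.

Definition thickening S e := [set v | exists y d, [/\ S y, `|d| < e & v = y + d]].

Lemma open_thickening S e : open (thickening S e).
Proof.
apply/open_normP => _ [y [d [Sy de ->]]]; exists (e - `|d|); first by rewrite subr_gt0.
move=> v dv; exists y, (v - y); split=> //; last by rewrite addrC subrK.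
by have := ler_normD (v - (y + d)) d; rewrite distrC opprD addrA subrK; lra.
Qed.

Lemma convex_thickening {S} e : is_convex_set S -> is_convex_set (thickening S e).
Proof.
move=> S_convex _ _ t [y1 [d1 [S1 d1e ->]]] [y2 [d2 [S2 d2e ->]]] t_ge0 t_le1.
exists (t *: y1 + (1 - t) *: y2), (t *: d1 + (1 - t) *: d2); split.
- exact: S_convex.
- apply: le_lt_trans (ler_normD _ _) _; rewrite !normrZ !ger0_norm ?subr_ge0 //.
  have [t_lt1|t_ge1] := ltP t 1.
    have : t * `|d1| <= t * e by rewrite ler_wpM2l // ltW.
    have : (1 - t) * `|d2| < (1 - t) * e by rewrite ltr_pM2l // subr_gt0.
    lra.
  have -> : t = 1 by apply/eqP; rewrite eq_le t_le1 t_ge1.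
  by rewrite subrr mul0r addr0 mul1r.
- by rewrite !scalerDr addrACA.
Qed.

Lemma lfun_ub_line f M y : linear_functional f ->
  (forall k, f (k *: y) <= M) -> f y = 0.
Proof.
move=> flin f_le; apply/eqP; apply: contraT => fy_neq0.
have := f_le ((`|M| + 1) / f y); rewrite (lfunZ flin) divfK //.
by have := ler_norm M; lra.
Qed.

Lemma lfun_ub_ball {f r M} : linear_functional f -> 0 < r ->
  (forall d, `|d| < r -> f d <= M) -> forall d, f d * r <= 2 * M * `|d|.
Proof.
move=> flin r_gt0 f_le d; have [->|d_neq0] := eqVneq d 0.
  by rewrite (lfun0 flin) mul0r normr0 mulr0.
have d_gt0 : 0 < `|d| by rewrite normr_gt0.
pose k := r / (2 * `|d|).
have kd : k * (2 * `|d|) = r by rewrite /k divfK // gt_eqF // mulr_gt0.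
have k_gt0 : 0 < k by rewrite /k divr_gt0 // mulr_gt0.
have := f_le (k *: d); rewrite (lfunZ flin) normrZ gtr0_norm // => /(_ ltac:(nra)).
by rewrite -kd; nra.
Qed.

End ConvexSets.

(** * Linear maximal monotone operators *)

Definition monotone_related {R : realType} {X : normedModType R} (B : operator X) x h :=
  forall y g, B y g -> 0 <= h (x - y) - g (x - y).

Section MaximalMonotone.
Context {R : realType} {X : normedModType R} {A : operator X}.
Hypothesis Amm : maximal_monotone A.

Lemma mmono_dual {x f} : A x f -> is_dual f.
Proof. by case: Amm => A_dual _; exact: A_dual. Qed.

Lemma mmono_mono {x y f g} : A x f -> A y g -> 0 <= f (x - y) - g (x - y).
Proof. by case: Amm => _ [A_mono _]; exact: A_mono. Qed.

Lemma mmono_related x h : is_dual h -> monotone_related A x h -> A x h.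
Proof.
move=> h_dual xh; case: Amm => _ [_ A_max].
have swap y g : A y g -> 0 <= g (y - x) - h (y - x).
  move=> Ayg; have := xh _ _ Ayg.
  by rewrite -[y - x]opprB (lfunN h_dual.1) (lfunN (mmono_dual Ayg).1); lra.
apply: (A_max (fun y g => A y g \/ y = x /\ g = h)); last by right.
- by move=> y g [/mmono_dual|[_ ->]].
- move=> y1 y2 g1 g2 [A1|[-> ->]] [A2|[-> ->]]; rewrite ?subrr //.
  + exact: mmono_mono.
  + exact: swap.
  + exact: xh.
- by move=> y g Ayg; left.
Qed.

Hypotheses (Asv : at_most_single_valued A) (Alin : linear_on_dom A).
Context {x0 : X} {f0 : X -> R}.
Hypothesis Ax0 : A x0 f0.

Lemma linear_mmono0 : A 0 (fun _ => 0).
Proof.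
have := Alin (-1) _ _ _ _ Ax0 Ax0; rewrite scaleN1r addNr.
by congr (A 0); apply: funext => z; rewrite mulN1r addNr.
Qed.

Lemma linear_mmonoZ a {x f} : A x f -> A (a *: x) (fun z => a * f z).
Proof.
move=> Axf; have := Alin a _ _ _ _ Axf linear_mmono0; rewrite addr0.
by congr (A _); apply: funext => z; rewrite addr0.
Qed.

Lemma linear_mmono_comb a b {x y f g} : A x f -> A y g ->
  A (a *: x + b *: y) (fun z => a * f z + b * g z).
Proof. by move=> Axf /(linear_mmonoZ b); exact: Alin Axf. Qed.

Lemma dom_comb a b {x y} : dom A x -> dom A y -> dom A (a *: x + b *: y).
Proof.
by move=> [f Axf] [g Ayg]; exists (fun z => a * f z + b * g z); exact: linear_mmono_comb.
Qed.

Lemma domZ a {x} : dom A x -> dom A (a *: x).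
Proof. by move=> [f Axf]; exists (fun z => a * f z); exact: linear_mmonoZ. Qed.

Lemma linear_mmono_ge0 {x f} : A x f -> 0 <= f x.
Proof. by move=> Axf; have := mmono_mono Axf linear_mmono0; rewrite !subr0. Qed.

(* (0, f) is monotonically related to A, so A 0 f, and A 0 0 forces f = 0. *)
Lemma dom_annihilator_trivial {f} : is_dual f ->
  (forall y, dom A y -> f y = 0) -> forall x, f x = 0.
Proof.
move=> f_dual f_dom x.
suff -> : f = (fun _ => 0) by [].
apply: Asv (linear_mmono0); apply: mmono_related => // y g Ayg.
rewrite sub0r (lfunN f_dual.1) (lfunN (mmono_dual Ayg).1) f_dom; last by exists g.
by rewrite oppr0 sub0r opprK; exact: linear_mmono_ge0.
Qed.

Lemma dom_dense w {e} : 0 < e -> exists2 y, dom A y & `|w - y| < e.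
Proof.
move=> e_gt0; apply: contrapT => dom_far.
have U0 : thickening (dom A) e 0.
  by exists 0, 0; split; [exists (fun _ => 0); exact: linear_mmono0|rewrite normr0|rewrite addr0].
have Uw : ~ thickening (dom A) e w.
  move=> [y [d [dom_y de wyd]]]; apply: dom_far; exists y => //.
  by rewrite wyd (addrC y) addrK.
have [f [flin [K f_le] f_lt]] := open_convex_separation (open_thickening _ _)
  (convex_thickening e (fun _ _ t Ax Ay _ _ => dom_comb t (1 - t) Ax Ay)) U0 Uw.
have f_dom y : dom A y -> f y = 0.
  move=> dom_y; apply: (lfun_ub_line f (f w)) => // k; apply/ltW/f_lt.
  by exists (k *: y), 0; split; [exact: domZ|rewrite normr0|rewrite addr0].
have := f_lt _ U0; rewrite (lfun0 flin).
by rewrite (dom_annihilator_trivial (is_dual_bounded flin f_le) f_dom) ltxx.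
Qed.

End MaximalMonotone.

(** * The sum with a normal cone *)

Lemma le0_of_lt_mulr (R : realType) (a mu : R) : (forall r, 0 < r -> a < mu * r) -> a <= 0.
Proof.
move=> a_lt; rewrite leNgt; apply/negP => a_gt0.
have [mu_le0|mu_gt0] := lerP mu 0.
  by have := a_lt 1 ltr01; rewrite mulr1; lra.
have mu1_gt0 : 0 < mu + 1 by lra.
have := a_lt (a / (mu + 1)) (divr_gt0 a_gt0 mu1_gt0).
rewrite mulrA ltr_pdivlMr // mulrDr mulr1; nra.
Qed.

Section ProductFunctionals.
Context {R : realType} {X : normedModType R}.

Lemma pair_decomp (x : X) (r : R) : (x, r) = r *: (0, 1) + (x, 0).
Proof. by apply/eqP; rewrite xpair_eqE /= scaler0 add0r addr0 scaler1 !eqxx. Qed.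

Lemma lfun_pair {F : X * R -> R} : linear_functional F ->
  forall x r, F (x, r) = F (x, 0) + r * F (0, 1).
Proof. by move=> Flin x r; rewrite {1}pair_decomp Flin addrC. Qed.

Lemma lfun_pair_fst {F : X * R -> R} : linear_functional F ->
  linear_functional (fun x => F (x, 0)).
Proof.
move=> Flin a x y; rewrite -Flin; congr F.
by apply/eqP; rewrite xpair_eqE /= scaler0 addr0 !eqxx.
Qed.

Lemma pair_comb (e1 e2 : X) (s1 s2 t : R) :
  t *: (e1, s1) + (1 - t) *: (e2, s2) = (t *: e1 + (1 - t) *: e2, t * s1 + (1 - t) * s2).
Proof. by apply/eqP; rewrite xpair_eqE /= !eqxx. Qed.

Definition cylinder_diff (P : set X) (H : set (X * R)) : set (X * R) :=
  [set w | exists u r e s, [/\ P u, 0 < r, H (e, s) & w = (u - e, r - s)]].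

Lemma open_cylinder_diff {P} H : open P -> open (cylinder_diff P H).
Proof.
move=> /open_normP P_open; apply/open_normP => _ [u [r [e [s [Pu r_gt0 Hes ->]]]]].
have [rho rho_gt0 ball_u] := P_open _ Pu.
exists (Num.min rho r); first by rewrite lt_min rho_gt0 r_gt0.
move=> [a b]; rewrite prod_normE /= lt_min !gt_max => /andP[/andP[ua _] /andP[_ rb]].
exists (a + e), (b + s), e, s; split => //.
- by apply: ball_u; rewrite opprD (addrC (- a)) addrA.
- by have := ler_norm (r - s - b); lra.
- by rewrite !addrK.
Qed.

Lemma convex_cylinder_diff {P H} : is_convex_set P -> is_convex_set H ->
  is_convex_set (cylinder_diff P H).
Proof.
move=> P_convex H_convex _ _ t [u1 [r1 [e1 [s1 [P1 r1_gt0 H1 ->]]]]]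
  [u2 [r2 [e2 [s2 [P2 r2_gt0 H2 ->]]]]] t_ge0 t_le1.
exists (t *: u1 + (1 - t) *: u2), (t * r1 + (1 - t) * r2),
  (t *: e1 + (1 - t) *: e2), (t * s1 + (1 - t) * s2); split.
- exact: P_convex.
- have [t_lt1|t_ge1] := ltP t 1.
    have : 0 < (1 - t) * r2 by rewrite mulr_gt0 // subr_gt0.
    by have := mulr_ge0 t_ge0 (ltW r1_gt0); lra.
  have -> : t = 1 by apply/eqP; rewrite eq_le t_le1 t_ge1.
  by rewrite subrr mul0r addr0 mul1r.
- by rewrite -pair_comb; exact: H_convex.
- rewrite pair_comb; congr pair; first by rewrite !scalerBr opprD addrACA.
  by rewrite !mulrBr opprD addrACA.
Qed.

End ProductFunctionals.

Section SumWithNormalCone.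
Context {R : realType} {X : normedModType R} {A : operator X} {C : set X}.
Hypotheses (Amm : maximal_monotone A) (Asv : at_most_single_valued A)
  (Alin : linear_on_dom A) (C_closed : closed C) (C_convex : is_convex_set C).
Context {x0 : X} {f0 : X -> R} {delta : R}.
Hypotheses (Ax0 : A x0 f0) (delta_gt0 : 0 < delta)
  (x0_ball : forall y, `|x0 - y| < delta -> C y).

Let Ix0 : interior C x0. Proof. by apply/interior_ballP; exists delta. Qed.

Lemma related_normal_nonpos {z zs p fp v} :
  monotone_related (op_sum A (normal_cone C)) z zs -> C p -> A p fp -> is_dual v ->
  (forall c, C c -> v (c - p) <= 0) -> v (z - p) <= 0.
Proof.
move=> zs_rel Cp Ap v_dual v_normal; rewrite leNgt; apply/negP => v_gt0.
have b_ge0 := normr_ge0 (zs (z - p) - fp (z - p)).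
pose lam := (`|zs (z - p) - fp (z - p)| + 1) / v (z - p).
have lam_ge0 : 0 <= lam by apply: divr_ge0; [lra|exact: ltW].
have : op_sum A (normal_cone C) p (fun x => fp x + lam * v x).
  exists fp, (fun x => lam * v x); split=> //; split=> //.
  split=> //; split; first exact: is_dual_scale.
  by move=> c /v_normal; exact: mulr_ge0_le0.
move/zs_rel; rewrite /lam divfK ?gt_eqF //.
by have := ler_norm (zs (z - p) - fp (z - p)); lra.
Qed.

Lemma normal_at_boundary {p} : C p -> ~ interior C p ->
  exists v, [/\ is_dual v, v (p - x0) = 1, forall c, C c -> v (c - p) <= 0
    & forall d, v d * delta <= 2 * `|d|].
Proof.
move=> Cp Ip.
have [l [llin [K l_le] l_lt]] :=
  open_convex_separation (@open_interior _ C) (convex_interior C_convex) Ix0 Ip.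
have gamma_gt0 : 0 < l p - l x0 by rewrite subr_gt0; exact: l_lt.
pose v x := (l p - l x0)^-1 * l x.
have vlin : linear_functional v := lfun_scale llin _.
have v_p : v (p - x0) = 1 by rewrite /v (lfunB llin) mulVf ?gt_eqF.
have v_normal c : C c -> v (c - p) <= 0.
  move=> Cc; rewrite /v (lfunB llin) pmulr_rle0 ?invr_gt0 // subr_le0.
  apply: (le_interior_le C_convex Ix0 llin) Cc => u Iu.
  exact/ltW/l_lt.
exists v; split=> //; first exact/is_dual_scale/(is_dual_bounded llin l_le).
move=> d; rewrite -[2]mulr1; apply: (lfun_ub_ball vlin delta_gt0) => {}d d_lt.
have /v_normal : C (x0 + d) by apply: x0_ball; rewrite opprD addrA subrr sub0r normrN.
by rewrite addrAC (lfunD vlin) -opprB (lfunN vlin) v_p; lra.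
Qed.

Lemma related_approx_mem {z zs y} :
  monotone_related (op_sum A (normal_cone C)) z zs -> dom A y ->
  exists2 p, C p & delta * `|z - p| <= `|z - y| * (delta + 2 * (`|z - y| + `|z - x0|)).
Proof.
move=> zs_rel dom_y.
have zy_ge0 := normr_ge0 (z - y); have zx0_ge0 := normr_ge0 (z - x0).
have [Cy|Cy] := pselect (C y).
  by exists y => //; rewrite mulrC ler_wpM2l //; lra.
have [s [s_ge0 s_le1 Cp Ip]] := segment_boundary C_closed Ix0 Cy.
set p := x0 + s *: (y - x0) in Cp Ip.
have [fp Ap] : dom A p.
  have -> : p = (1 - s) *: x0 + s *: y.
    by rewrite /p scalerBr scalerBl scale1r -addrA (addrC (s *: y)).
  by apply: (dom_comb Alin Ax0) dom_y; exists f0.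
have [v [v_dual v_p v_normal v_le]] := normal_at_boundary Cp Ip.
have vlin := v_dual.1.
have v_zp := related_normal_nonpos zs_rel Cp Ap v_dual v_normal.
have yp : y - p = (1 - s) *: (y - x0) by rewrite /p opprD addrA scalerBl scale1r addrAC.
have s_v : s * v (y - x0) = 1 by rewrite -(lfunZ vlin) -v_p /p addrAC subrr add0r.
have gap : (1 - s) * delta <= 2 * `|z - y|.
  have : v (z - y) + (1 - s) * v (y - x0) <= 0.
    by rewrite -(lfunZ vlin) -yp -(lfunD vlin) addrA subrK.
  move=> /(ler_wpM2l s_ge0); rewrite mulr0 mulrDr mulrCA s_v mulr1 => zy_le.
  have := v_le (y - z); rewrite distrC -[y - z]opprB (lfunN vlin) => zy_ge.
  have := ler_wpM2r (ltW delta_gt0) zy_le; rewrite mul0r mulrDl.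
  have : 0 <= (1 - s) * `|z - y| by rewrite mulr_ge0 // subr_ge0.
  nra.
have zp : `|z - p| <= `|z - y| + (1 - s) * `|y - x0|.
  have -> : z - p = (z - y) + (1 - s) *: (y - x0) by rewrite -yp addrA subrK.
  by apply: le_trans (ler_normD _ _) _; rewrite normrZ ger0_norm ?subr_ge0.
have yx0 : `|y - x0| <= `|z - y| + `|z - x0|.
  by have := ler_normD (y - z) (z - x0); rewrite addrA subrK [`|y - z|]distrC.
exists p => //.
have := ler_wpM2l (ltW delta_gt0) zp.
have := ler_wpM2r (normr_ge0 (y - x0)) gap.
have := ler_wpM2l (mulr_ge0 (ler0n _ 2) zy_ge0) yx0.
nra.
Qed.

Lemma related_mem {z zs} : monotone_related (op_sum A (normal_cone C)) z zs -> C z.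
Proof.
move=> zs_rel; apply: C_closed => B /(interior_ballP B z)[e e_gt0 ball_B].
have n_ge0 := normr_ge0 (z - x0).
have den_gt0 : 0 < 2 * (delta + 2 * (e + `|z - x0|)) by have := delta_gt0; lra.
pose eta := delta * e / (2 * (delta + 2 * (e + `|z - x0|))).
have eta_gt0 : 0 < eta by rewrite divr_gt0 // mulr_gt0.
have eta_den : eta * (2 * (delta + 2 * (e + `|z - x0|))) = delta * e.
  by rewrite divfK ?gt_eqF.
have [y dom_y zy] := dom_dense Amm Asv Alin Ax0 z eta_gt0.
have [p Cp zp] := related_approx_mem zs_rel dom_y.
exists p; split=> //; apply: ball_B.
have zy_ge0 := normr_ge0 (z - y).
have eta_le : eta <= e by have := delta_gt0; nra.
rewrite -(ltr_pM2l delta_gt0); apply: le_lt_trans zp _.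
have := delta_gt0; nra.
Qed.

Section MonotonicityGap.
Context {z : X} {zs : X -> R}.
Hypotheses (zs_dual : is_dual zs)
  (zs_rel : monotone_related (op_sum A (normal_cone C)) z zs).

Definition mono_gap e (fe : X -> R) := fe (z - e) - zs (z - e).

Definition gap_hypograph : set (X * R) :=
  [set w | exists fe, A w.1 fe /\ w.2 <= mono_gap w.1 fe].

Lemma mono_gap_le0 {e fe} : C e -> A e fe -> mono_gap e fe <= 0.
Proof.
move=> Ce Ae; have : op_sum A (normal_cone C) e (fun x => fe x + 0).
  exists fe, (fun _ => 0); split=> //; split=> //.
  by split=> //; split=> [|c _]; [exact: is_dual0|rewrite lexx].
by move/zs_rel; rewrite /mono_gap addr0; lra.
Qed.

(* Concavity of the gap along the graph: the cross term is t (1 - t) times a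
   monotonicity inequality for A. *)
Lemma convex_gap_hypograph : is_convex_set gap_hypograph.
Proof.
move=> [e1 s1] [e2 s2] t [f1 [A1 s1_le]] [f2 [A2 s2_le]] t_ge0 t_le1.
rewrite pair_comb; exists (fun x => t * f1 x + (1 - t) * f2 x); split.
  exact: (linear_mmono_comb Alin Ax0 t (1 - t) A1 A2).
move: s1_le s2_le (mmono_mono Amm A1 A2); rewrite /mono_gap /=.
have l1 := (mmono_dual Amm A1).1; have l2 := (mmono_dual Amm A2).1.
have lz := zs_dual.1.
rewrite !(lfunB l1) !(lfunB l2) !(lfunB lz) !(lfunD l1) !(lfunD l2) !(lfunD lz).
rewrite !(lfunZ l1) !(lfunZ l2) !(lfunZ lz) => s1_le s2_le mono.
have t1_ge0 : 0 <= 1 - t by rewrite subr_ge0.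
have := mulr_ge0 (mulr_ge0 t_ge0 t1_ge0) mono.
have := ler_wpM2l t_ge0 s1_le; have := ler_wpM2l t1_ge0 s2_le.
nra.
Qed.

Lemma slope_lt0 (us : X -> R) (lam : R) : linear_functional us ->
  (forall u e s, interior C u -> gap_hypograph (e, s) -> us u - us e - lam * s <= 0) ->
  ~ (lam = 0 /\ forall x, us x = 0) -> lam < 0.
Proof.
move=> uslin us_le us_neq0.
have lam_le0 : lam <= 0.
  have : gap_hypograph (x0, - `|mono_gap x0 f0| - 1).
    by exists f0; split=> //=; have := ler_norm (- mono_gap x0 f0); rewrite normrN; lra.
  move/(us_le _ _ _ Ix0); rewrite subrr sub0r.
  by have := normr_ge0 (mono_gap x0 f0); nra.
rewrite lt_neqAle lam_le0 andbT; apply/eqP => lam0; apply: us_neq0; split=> //.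
have us_dom u y : interior C u -> dom A y -> us u <= us y.
  move=> Iu [fy Ay]; have /(us_le _ _ _ Iu) : gap_hypograph (y, mono_gap y fy).
    by exists fy.
  by rewrite lam0 mul0r subr0 subr_le0.
have us_dom0 y : dom A y -> us y = 0.
  move=> dom_y; apply/eqP; rewrite -oppr_eq0 -mulN1r; apply/eqP.
  apply: (lfun_ub_line _ (- us x0) y (lfun_scale uslin (-1))) => k.
  by rewrite mulN1r lerN2; exact: us_dom Ix0 (domZ Alin Ax0 k dom_y).
have [rho rho_gt0 ball_x0] := (open_normP _).1 (@open_interior _ C) _ Ix0.
have us_ball d : `|d| < rho -> us d <= 0.
  move=> d_lt; have : interior C (x0 + d).
    by apply: ball_x0; rewrite opprD addrA subrr sub0r normrN.
  move/us_dom/(_ (ex_intro _ f0 Ax0)); rewrite (lfunD uslin).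
  by rewrite us_dom0 //; [lra|exists f0].
move=> x; have := lfun_ub_ball uslin rho_gt0 us_ball.
move=> /[dup] /(_ x) + /(_ (- x)); rewrite (lfunN uslin) !mulr0 !mul0r.
by rewrite !pmulr_lle0 // => ? ?; lra.
Qed.

Lemma separating_slope : exists2 ms, is_dual ms &
  forall u e fe, interior C u -> A e fe -> mono_gap e fe <= ms e - ms u.
Proof.
set U := cylinder_diff (interior C) gap_hypograph.
have U_x0 : U (x0 - x0, 1 - mono_gap x0 f0).
  by exists x0, 1, x0, (mono_gap x0 f0); split=> //; exists f0.
have U_0 : ~ U 0.
  move=> [u [r [e [s [Iu r_gt0 [fe [/= Ae s_le]] /esym/eqP]]]]].
  rewrite xpair_eqE !subr_eq0 => /andP[/eqP ue /eqP rs]; rewrite {}ue in Iu.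
  by have := mono_gap_le0 (interior_subset Iu) Ae; lra.
have [F [Flin [K F_le] F_lt]] := open_convex_separation
  (open_cylinder_diff gap_hypograph (@open_interior _ C))
  (convex_cylinder_diff (convex_interior C_convex) convex_gap_hypograph) U_x0 U_0.
pose us x := F (x, 0); pose lam := F (0, 1).
have F_us x r : F (x, r) = us x + r * lam by rewrite (lfun_pair Flin).
have uslin : linear_functional us := lfun_pair_fst Flin.
have F0 : F 0 = 0 := lfun0 Flin.
have us_le u e s : interior C u -> gap_hypograph (e, s) -> us u - us e - lam * s <= 0.
  move=> Iu Hes; apply: (@le0_of_lt_mulr _ _ (- lam)) => r r_gt0.
  have /F_lt : U (u - e, r - s) by exists u, r, e, s.
  by rewrite F0 F_us (lfunB uslin); lra.
have lam_lt0 : lam < 0.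
  apply: slope_lt0 uslin us_le _ => -[lam0 us0].
  by have := F_lt _ U_x0; rewrite F0 F_us us0 lam0 mulr0 addr0 ltxx.
exists (fun x => (- lam)^-1 * us x).
  apply/is_dual_scale/(is_dual_bounded uslin (K := K)) => v.
  by have := F_le (v, 0); rewrite prod_normE /= normr0 (max_idPl (normr_ge0 v)).
move=> u e fe Iu Ae.
have /(us_le _ _ _ Iu) : gap_hypograph (e, mono_gap e fe) by exists fe.
have nlam_gt0 : 0 < - lam by rewrite oppr_gt0.
move=> us_gap; rewrite -mulrBr -(ler_pM2l nlam_gt0) mulrA mulfV ?gt_eqF // mul1r; lra.
Qed.

Lemma related_mem_sum : op_sum A (normal_cone C) z zs.
Proof.
have Cz := related_mem zs_rel.
have [ms ms_dual ms_le] := separating_slope.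
have mslin := ms_dual.1.
have ms_z e fe : A e fe -> mono_gap e fe <= ms e - ms z.
  move=> Ae; suff : ms z <= ms e - mono_gap e fe by lra.
  apply: (le_interior_le C_convex Ix0 mslin) Cz => u Iu.
  by have := ms_le u e fe Iu Ae; lra.
have Az : A z (fun x => zs x - ms x).
  apply: (mmono_related Amm) (is_dual_sub zs_dual ms_dual) _ => e fe Ae.
  by have := ms_z e fe Ae; rewrite /mono_gap (lfunB mslin); lra.
exists (fun x => zs x - ms x), ms; split=> //; split.
  split=> //; split=> // c Cc; rewrite (lfunB mslin) subr_le0.
  apply: (le_interior_le C_convex Ix0 mslin) Cc => u Iu.
  by have := ms_le u z _ Iu Az; rewrite /mono_gap subrr (lfun0 mslin) (lfun0 zs_dual.1); lra.
by apply: funext => x; rewrite subrK.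
Qed.

End MonotonicityGap.

End SumWithNormalCone.

Section OperatorSum.
Context {R : realType} {X : normedModType R}.

Lemma into_dual_op_sum (A B : operator X) :
  into_dual A -> into_dual B -> into_dual (op_sum A B).
Proof.
move=> A_dual B_dual x h [f [g [Af [Bg ->]]]].
exact: is_dual_add (A_dual _ _ Af) (B_dual _ _ Bg).
Qed.

Lemma monotone_op_sum (A B : operator X) :
  Defs.monotone A -> Defs.monotone B -> Defs.monotone (op_sum A B).
Proof.
move=> A_mono B_mono x y _ _ [f [g [Af [Bg ->]]]] [f' [g' [Af' [Bg' ->]]]].
by have := A_mono _ _ _ _ Af Af'; have := B_mono _ _ _ _ Bg Bg'; lra.
Qed.

Lemma into_dual_normal_cone (C : set X) : into_dual (normal_cone C).
Proof. by move=> x g [_ []]. Qed.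

Lemma monotone_normal_cone (C : set X) : Defs.monotone (normal_cone C).
Proof.
move=> x y g g' [Cx [[glin _] g_le]] [Cy [_ g'_le]].
have := g_le _ Cy; have := g'_le _ Cx.
by rewrite -[y - x]opprB (lfunN glin); lra.
Qed.

End OperatorSum.

Theorem corollary3p2 (R : realType) (X : completeNormedModType R)
  (A : operator X) (C : set X) :
  maximal_monotone A ->
  at_most_single_valued A ->
  C !=set0 -> closed C -> is_convex_set C ->
  dom_subspace A -> linear_on_dom A ->
  (dom A `&` interior C) !=set0 ->
  maximal_monotone (op_sum A (normal_cone C)).
Proof.
move=> Amm Asv _ C_closed C_convex _ Alin.
move=> [x0 [[f0 Ax0] /interior_ballP[delta delta_gt0 x0_ball]]].
have [A_dual [A_mono _]] := Amm.
split; [|split].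
- exact: into_dual_op_sum A_dual (@into_dual_normal_cone _ _ C).
- exact: monotone_op_sum A_mono (@monotone_normal_cone _ _ C).
- move=> B B_dual B_mono B_sub z zs Bz.
  apply: (related_mem_sum Amm Asv Alin C_closed C_convex Ax0 delta_gt0 x0_ball
    (B_dual _ _ Bz)).
  by move=> y h /B_sub By; exact: B_mono Bz By.
Qed.
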